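(* For every integer $d>2$, the number of $(d,d)$-necklaces (circular arrangements of $d$ white and $d$ black beads, modulo cyclic rotation, with no primitivity requirement) is even. *)

From mathcomp Require Import all_boot.
Set Implicit Arguments. Unset Strict Implicit. Unset Printing Implicit Defensive.

(* A bead arrangement of length n: a binary word (true = black, false = white). *)
Definition dd_words (d : nat) : {set (d + d).-tuple bool} :=
  [set w : (d + d).-tuple bool | count id w == d].

Definition rot_equiv (n : nat) : rel (n.-tuple bool) :=
  fun u v => [exists k : 'I_n.+1, val v == rot k (val u)].

Definition dd_necklaces (d : nat) : {set {set (d + d).-tuple bool}} :=
  equivalence_partition (@rot_equiv (d + d)) (dd_words d).

From mathcomp Require Import all_boot all_fingroup.
From mathcomp Require Import pgroup sylow cyclic zify.
Set Implicit Arguments. Unset Strict Implicit. Unset Printing Implicit Defensive.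

(* Write d = 2^a m with m odd and n = 2d.  Necklaces are the orbits of the
   cyclic rotation group G on balanced words of length n.  Its subgroup P
   generated by the rotation by m has odd index m, and G is abelian, so the
   number of P-orbits has the same parity.  Complementing the colours is a
   fixed-point-free involution commuting with the rotations, so the number of
   P-orbits has the parity of the number of complement-stable P-orbits.  Such
   an orbit of size 2^(t+1) is the orbit of a word x whose complement is x
   rotated by m 2^t; these words are determined by their first m 2^t letters,
   which gives 2^(m 2^t - t - 1) such orbits, an odd number only for m = 1 and
   t <= 1.  As d > 2, the total is even. *)

Lemma odd_sum (I : Type) (r : seq I) (P : pred I) (F : I -> nat) :
  odd (\sum_(i <- r | P i) F i) = odd (\sum_(i <- r | P i) odd (F i)).
Proof. by elim/big_rec2: _ => // i m n _ IH; rewrite !oddD IH oddb. Qed.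

Lemma odd_pow2_quotient m t f : odd m -> f * 2 ^ t.+1 = 2 ^ (m * 2 ^ t) ->
  odd f = (m == 1) && (t < 2).
Proof.
move=> odd_m eq_f; have m_gt0 : 0 < m by case: m odd_m {eq_f}.
have lt_t_m2t : t < m * 2 ^ t := leq_trans (ltn_expl t (isT : 1 < 2)) (leq_pmull _ m_gt0).
have -> : f = 2 ^ (m * 2 ^ t - t.+1).
  by apply/eqP; rewrite -(eqn_pmul2r (expn_gt0 2 t.+1)) -expnD subnK // eq_f.
rewrite oddX orbF subn_eq0; case: t {eq_f lt_t_m2t} => [|[|t]]; rewrite ?muln1; try lia.
have := ltn_expl t (isT : 1 < 2); have := leq_pmull (2 ^ t) m_gt0; rewrite !expnS; lia.
Qed.

Lemma odd_sum_pow2 m k (f : nat -> nat) : odd m -> (m = 1 -> 1 < k) ->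
  (forall t, t < k -> f t * 2 ^ t.+1 = 2 ^ (m * 2 ^ t)) -> ~~ odd (\sum_(t < k) f t).
Proof.
move=> odd_m k_gt1 eq_f; rewrite odd_sum.
under eq_bigr => t _ do rewrite (odd_pow2_quotient odd_m (eq_f t (ltn_ord t))).
case: eqP k_gt1 => [-> /(_ erefl) | _ _]; last by rewrite big1.
case: k {eq_f} => [|[|k]] // _; rewrite !big_ord_recl big1 // => i _.
Qed.

Lemma card_fibers (T : finType) (A : {set T}) (f : T -> nat) K :
  {in A, forall x, f x < K} -> #|A| = \sum_(i < K) #|[set x in A | f x == i]|.
Proof.
case: K => [|K] ltfK.
  by rewrite big_ord0; apply: eq_card0 => x; apply/negbTE/negP => /ltfK.
rewrite -sum1_card (partition_big (fun x => inord (f x) : 'I_K.+1) xpredT) //=.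
apply: eq_bigr => i _; rewrite -sum1_card; apply: eq_bigl => x; rewrite inE.
case Ax: (x \in A) => //=; rewrite -val_eqE /= inordK ?ltfK //.
Qed.

Lemma modn_pow2_half t j :
  2 ^ t.+1 %| j.*2 -> ~~ (2 ^ t.+1 %| j) -> j %% 2 ^ t.+1 = 2 ^ t.
Proof.
rewrite expnSr -muln2 dvdn_pmul2r // => /dvdnP[q ->{j}] not_dvd.
have odd_q : odd q.
  apply: contraNT not_dvd => /negbTE even_q.
  by rewrite -(odd_double_half q) even_q add0n -mul2n [_ * 2 ^ t]mulnC mulnA dvdn_mulr.
by rewrite [2 ^ t * 2]mulnC -muln_modl modn2 odd_q mul1n.
Qed.

Fixpoint alternate (y : seq bool) k :=
  if k is k'.+1 then y ++ alternate (map negb y) k' else [::].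

Lemma size_alternate y k : size (alternate y k) = k * size y.
Proof. by elim: k y => // k IHk y; rewrite /= size_cat IHk size_map mulSn. Qed.

Lemma map_alternate y k : map negb (alternate y k) = alternate (map negb y) k.
Proof. by elim: k y => // k IHk y; rewrite /= map_cat IHk. Qed.

Lemma alternateSr y k :
  alternate y k.+1 = alternate y k ++ (if odd k then map negb y else y).
Proof.
elim: k y => [|k IHk] y; first by rewrite /= cats0.
transitivity (y ++ alternate (map negb y) k.+1) => //.
rewrite IHk mapK /= ?catA; last exact: negbK.
by case: (odd k).
Qed.

Lemma rot_alternate y k :
  rot (size y) (alternate y k.*2) = map negb (alternate y k.*2).
Proof.
case: k => [|k]; first by rewrite rot_oversize.
rewrite doubleS map_alternate.
rewrite -[alternate y _]/(y ++ alternate (map negb y) k.*2.+1) rot_size_cat.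
by rewrite [RHS]alternateSr oddS odd_double mapK //; exact: negbK.
Qed.

Lemma alternate_cat_negb w y z k : size y = size w -> size z = k * size w ->
  z ++ y = w ++ map negb z -> z = alternate w k.
Proof.
elim: k w z => [|k IHk] w z size_y size_z; first by move/size0nil: size_z => ->.
have le_wz : size w <= size z by rewrite size_z mulSn leq_addr.
rewrite -(cat_take_drop (size w) z) -catA map_cat => /eqP.
rewrite eqseq_cat ?size_takel // => /andP[/eqP -> /eqP e]; congr (_ ++ _).
apply: IHk e; rewrite ?size_map ?size_drop ?size_z ?mulSn ?addKn //.
Qed.

Lemma alternate_rot_negb s h k : size s = k.+1 * h -> rot h s = map negb s ->
  s = alternate (take h s) k.+1.
Proof.
move=> size_s; have le_hs : h <= size s by rewrite size_s mulSn leq_addr.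
rewrite /rot -{3}(cat_take_drop h s) map_cat => e.
rewrite -{1}(cat_take_drop h s) /=; congr (_ ++ _).
by apply: alternate_cat_negb e; rewrite ?size_map ?size_drop ?size_takel // size_s mulSn addKn.
Qed.

Local Open Scope group_scope.

Section OrbitParity.

Variable T : finType.
Implicit Types (P G H : {group {perm T}}) (S : {set T}).

Lemma acts_cycle (c : {perm T}) S :
  {in S, forall x, c x \in S} -> [acts <[c]>, on S | 'P].
Proof.
move=> cS; rewrite cycle_subG !inE; apply/subsetP => x Sx.
by rewrite inE /= cS.
Qed.

Lemma setact_orbit_cent P x (g : {perm T}) : g \in 'C(P) ->
  ('P^* (orbit 'P P x) g)%act = orbit 'P P (g x).
Proof.
by move=> cPg; rewrite /= setact_orbit (normP (subsetP (cent_sub P) g cPg)).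
Qed.

Lemma acts_orbits H P S : H \subset 'C(P) -> [acts H, on S | 'P] ->
  [acts H, on orbit 'P P @: S | 'P^*].
Proof.
move=> cPH nSH; apply/subsetP => g Hg; rewrite !inE.
apply/subsetP => _ /imsetP[x Sx ->]; rewrite inE setact_orbit_cent ?(subsetP cPH) //.
by rewrite imset_f // (astabs_act _ (subsetP nSH g Hg)).
Qed.

Lemma orbit_setact_orbits G P x : G \subset 'C(P) ->
  orbit 'P^* G (orbit 'P P x) = orbit 'P P @: orbit 'P G x.
Proof.
move=> cPG; rewrite [orbit 'P G x]orbitE -imset_comp; apply: eq_in_imset => g Gg /=.
exact/setact_orbit_cent/(subsetP cPG).
Qed.

Lemma odd_card_orbits_odd_index G P S : P \subset G -> abelian G -> odd #|G : P| ->
  [acts G, on S | 'P] -> odd #|orbit 'P G @: S| = odd #|orbit 'P P @: S|.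
Proof.
move=> sPG abG oddGP nSG; have cPG : G \subset 'C(P) := subset_trans abG (centS sPG).
(* G permutes the P-orbits; its orbits on them correspond to its orbits on S,
   and their sizes divide #|G : P| since P stabilises each P-orbit. *)
have nOmG := acts_orbits cPG nSG.
have -> : #|orbit 'P G @: S| = #|orbit 'P^* G @: (orbit 'P P @: S)|.
  have -> : orbit 'P^* G @: (orbit 'P P @: S) =
            (fun O : {set T} => orbit 'P P @: O) @: (orbit 'P G @: S).
    by rewrite -!imset_comp; apply: eq_in_imset => x _ /=; rewrite orbit_setact_orbits.
  apply/esym/card_in_imset => _ _ /imsetP[x Sx ->] /imsetP[y Sy ->] eq_xy; apply/orbit_eqP.
  have /imsetP[z Gyz eq_xz] : orbit 'P P x \in orbit 'P P @: orbit 'P G y.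
    by rewrite -eq_xy imset_f ?orbit_refl.
  have /orbitP[p Pp <-] : x \in orbit 'P P z by rewrite -eq_xz orbit_refl.
  by rewrite orbit_actr // (subsetP sPG).
rewrite [in RHS](card_partition (orbit_partition nOmG)) odd_sum.
rewrite -[in LHS]sum1_card; congr odd; apply: eq_bigr => _ /imsetP[B /imsetP[x _ ->] ->].
rewrite card_orbit (dvdn_odd _ oddGP) //; apply: indexgS.
rewrite subsetI sPG; apply/subsetP => p Pp; apply/astab1P.
by rewrite setact_orbit_cent ?orbit_act // (subsetP cPG) ?(subsetP sPG).
Qed.

Lemma odd_card_orbits_involution P S (c : {perm T}) :
  c ^+ 2 = 1 -> c \in 'C(P) -> {in S, forall x, c x \in S} ->
  odd #|orbit 'P P @: S| = odd #|'Fix_(orbit 'P P @: S | 'P^*)[c]|.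
Proof.
move=> c2 cPc cS.
have cPC : <[c]> \subset 'C(P) by rewrite cycle_subG.
have nOmc := acts_orbits cPC (acts_cycle cS).
have c2group : 2.-group <[c]>.
  by rewrite /pgroup -orderE (pnat_dvd _ (pnat_id (isT : prime 2))) ?order_dvdn ?c2.
have := pgroup_fix_mod c2group nOmc.
by rewrite afix_cycle !modn2 => /(congr1 odd); rewrite !oddb.
Qed.

End OrbitParity.

Section PermOrbits.

Variable T : finType.
Implicit Types (g : {perm T}) (x : T).

Lemma permX_mod_porbit g x k : (g ^+ k) x = (g ^+ (k %% #|porbit g x|)) x.
Proof.
have iterL q : iter (q * #|porbit g x|) g x = x.
  by elim: q => // q IHq; rewrite mulSn iterD IHq iter_porbit.
by rewrite !permX {1}(divn_eq k #|porbit g x|) addnC iterD iterL.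
Qed.

Lemma card_porbit_dvdn g x k : (#|porbit g x| %| k) = ((g ^+ k) x == x).
Proof.
rewrite permX_mod_porbit /dvdn; set L := #|porbit g x|.
have L_gt0 : 0 < L by rewrite lt0n card_porbit_neq0.
apply/eqP/eqP => [-> | fix_x]; first by rewrite expg0 perm1.
have lt_kL : k %% L < size (traject g x L) by rewrite size_traject ltn_pmod.
have lt_0L : 0 < size (traject g x L) by rewrite size_traject.
have := nth_uniq x lt_kL lt_0L (uniq_traject_porbit g x).
by rewrite !nth_traject ?ltn_pmod //= -permX fix_x eqxx => /esym/eqP.
Qed.

End PermOrbits.

Section HalfTurn.

Variables (T : finType) (g c : {perm T}) (k : nat) (S : {set T}).
Hypotheses (cg : commute c g) (cK : involutive c) (c_fixfree : forall x, c x != x).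
Hypotheses (g_order : g ^+ (2 ^ k) = 1) (gS : {in S, forall x, g x \in S}).

Definition halfturn t := [set x in S | c x == (g ^+ (2 ^ t)) x].

Let cgX j x : c ((g ^+ j) x) = (g ^+ j) (c x).
Proof. by rewrite -!permM (commuteX j cg). Qed.

Lemma card_porbit_halfturn t x : c x = (g ^+ (2 ^ t)) x -> #|porbit g x| = (2 ^ t.+1)%N.
Proof.
move=> cx; have : #|porbit g x| %| (2 ^ t.+1)%N.
  by rewrite card_porbit_dvdn expnS mul2n -addnn expgD permM -cx -cgX -cx cK.
case/(dvdn_pfactor _ _ (isT : prime 2)) => s le_s_t1 Ls; rewrite Ls.
congr (2 ^ _)%N; apply/eqP; rewrite eqn_leq le_s_t1 ltnNge /=.
apply: contra (c_fixfree x) => le_s_t.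
by rewrite cx -card_porbit_dvdn Ls dvdn_exp2l.
Qed.

Lemma halfturn_of_mem_porbit x : c x \in porbit g x ->
  exists2 t, t < k & c x = (g ^+ (2 ^ t)) x.
Proof.
case/porbitP => j cx.
have : #|porbit g x| %| (2 ^ k)%N by rewrite card_porbit_dvdn g_order perm1.
case/(dvdn_pfactor _ _ (isT : prime 2)) => s le_s_k Ls.
have not_dvd_j : ~~ (#|porbit g x| %| j) by rewrite card_porbit_dvdn -cx c_fixfree.
have dvd_2j : #|porbit g x| %| j.*2.
  by rewrite card_porbit_dvdn -addnn expgD permM -cx -cgX -cx cK.
case: s le_s_k Ls => [|t] lt_t_k Ls; first by rewrite Ls dvd1n in not_dvd_j.
by exists t => //; rewrite cx permX_mod_porbit Ls modn_pow2_half // -Ls.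
Qed.

Lemma halfturn_acts t : [acts <[g]>, on halfturn t | 'P].
Proof.
apply: acts_cycle => x; rewrite !inE => /andP[Sx /eqP cx].
by rewrite gS //= -[g]expg1 cgX cx -!permM -!expgD addnC.
Qed.

Lemma card_orbits_halfturn t :
  (#|orbit 'P <[g]> @: halfturn t| * 2 ^ t.+1)%N = #|halfturn t|.
Proof.
apply/esym/card_uniform_partition; last exact: orbit_partition (halfturn_acts t).
by move=> _ /imsetP[x /setIdP[_ /eqP cx] ->]; rewrite -porbitE (card_porbit_halfturn cx).
Qed.

Lemma fixed_orbitE x :
  ('P^* (orbit 'P <[g]> x) c == orbit 'P <[g]> x)%act = (c x \in porbit g x).
Proof.
have cPc : c \in 'C(<[g]>) by rewrite cent_cycle; apply/cent1P.
by rewrite setact_orbit_cent // porbitE; apply/eqP/orbit_eqP.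
Qed.

Lemma fixed_orbitP B : B \in 'Fix_(orbit 'P <[g]> @: S | 'P^*)[c] ->
  exists t, [/\ t < k, logn 2 #|B| = t.+1 & B \in orbit 'P <[g]> @: halfturn t].
Proof.
rewrite inE => /andP[/imsetP[x Sx ->] /afix1P/eqP].
rewrite fixed_orbitE => /halfturn_of_mem_porbit[t lt_tk cx]; exists t; split => //.
  by rewrite -porbitE (card_porbit_halfturn cx) pfactorK.
by apply: imset_f; rewrite inE Sx cx eqxx.
Qed.

Lemma card_fixed_orbits :
  #|'Fix_(orbit 'P <[g]> @: S | 'P^*)[c]| =
    \sum_(t < k) #|orbit 'P <[g]> @: halfturn t|.
Proof.
rewrite (@card_fibers _ _ (fun B : {set T} => logn 2 #|B|) k.+1); last first.
  by move=> B /fixed_orbitP[t [lt_tk -> _]].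
rewrite big_ord_recl (_ : #|_| = 0) ?add0n; last first.
  by apply: eq_card0 => B; apply/negbTE/negP => /setIdP[/fixed_orbitP[t [_ -> _]]].
apply: eq_bigr => t _; apply: eq_card => B; rewrite inE lift0.
apply/andP/idP => [[/fixed_orbitP[t' [_ -> ht']] /eqP[<-]] // | /imsetP[x ht ->]].
move: ht; rewrite inE => /andP[Sx /eqP cx]; split.
  by rewrite inE imset_f //; apply/afix1P/eqP; rewrite fixed_orbitE cx mem_porbit.
by rewrite -porbitE (card_porbit_halfturn cx) pfactorK.
Qed.

End HalfTurn.

Section Rotation.

Variables (T : finType) (n : nat).
Implicit Type x : n.-tuple T.

Definition rot1_tuple x := [tuple of rot 1 x].

Lemma rot1_tuple_inj : injective rot1_tuple.
Proof. by move=> x y /(congr1 val) /rot_inj /val_inj. Qed.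

Definition rot_perm : {perm n.-tuple T} := perm rot1_tuple_inj.

Lemma rot_permE x : rot_perm x = rot 1 x :> seq T.
Proof. by rewrite permE. Qed.

Lemma rot_permX k x : k <= n -> (rot_perm ^+ k) x = rot k x :> seq T.
Proof.
elim: k => [|k IHk] lt_kn; first by rewrite expg0 perm1 rot0.
by rewrite expgSr permM rot_permE (IHk (ltnW lt_kn)) -rotS ?size_tuple.
Qed.

Lemma rot_perm_order : rot_perm ^+ n = 1.
Proof.
apply/permP => x; apply: val_inj; by rewrite /= rot_permX ?rot_oversize ?size_tuple ?perm1.
Qed.

Lemma rot_permXE k x : 0 < n -> (rot_perm ^+ k) x = rot (k %% n) x :> seq T.
Proof.
by move=> n_gt0; rewrite -(expg_mod k rot_perm_order) rot_permX // ltnW // ltn_pmod.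
Qed.

Lemma count_rot_permX (p : pred T) k x : count p ((rot_perm ^+ k) x) = count p x.
Proof.
elim: k => [|k IHk]; first by rewrite expg0 perm1.
by rewrite expgSr permM rot_permE /rot count_cat addnC -count_cat cat_take_drop IHk.
Qed.

End Rotation.

Arguments rot_perm {T} n.

Section Complement.

Variable n : nat.
Implicit Type x : n.-tuple bool.

Definition compl_tuple x := [tuple of map negb x].

Lemma compl_tuple_inj : injective compl_tuple.
Proof. by move=> x y /(congr1 val) /(inj_map negb_inj) /val_inj. Qed.

Definition compl_perm : {perm n.-tuple bool} := perm compl_tuple_inj.

Lemma compl_permE x : compl_perm x = map negb x :> seq bool.
Proof. by rewrite permE. Qed.

Lemma compl_permK : involutive compl_perm.
Proof. by move=> x; apply: val_inj; rewrite /= !compl_permE mapK //; exact: negbK. Qed.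

Lemma compl_perm2 : compl_perm ^+ 2 = 1.
Proof. by apply/permP => x; rewrite expgS expg1 permM compl_permK perm1. Qed.

Lemma compl_perm_neq x : 0 < n -> compl_perm x != x.
Proof.
move=> n_gt0; apply/eqP => /(congr1 (fun y : n.-tuple bool => nth false y 0)).
by rewrite compl_permE (nth_map false) ?size_tuple //; case: (nth _ _ _).
Qed.

Lemma count_compl_perm x : count id (compl_perm x) = n - count id x.
Proof.
transitivity (size x - count id x); last by rewrite size_tuple.
by rewrite compl_permE count_map -(count_predC id) addKn; apply: eq_count.
Qed.

Lemma commute_compl_rot : commute compl_perm (rot_perm n).
Proof.
apply/permP => x; apply: val_inj.
by rewrite /= !permM rot_permE !compl_permE rot_permE map_rot.
Qed.

End Complement.

Definition antiperiodic n h : {set n.-tuple bool} :=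
  [set x | compl_perm n x == (rot_perm n ^+ h) x].

Lemma antiperiodicP n h (x : n.-tuple bool) : h <= n ->
  reflect (rot h x = map negb x) (x \in antiperiodic n h).
Proof.
by move=> le_hn; rewrite inE -val_eqE /= compl_permE rot_permX // eq_sym; apply: eqP.
Qed.

Lemma count_antiperiodic n h (x : n.-tuple bool) :
  x \in antiperiodic n h -> (count id x).*2 = n.
Proof.
rewrite inE -addnn => /eqP eq_x; have := count_compl_perm x.
rewrite eq_x count_rot_permX => {2}->; rewrite subnKC //.
by have := count_size id x; rewrite size_tuple.
Qed.

Section CardAntiperiodic.

Variables (n h : nat).
Hypotheses (n_gt0 : 0 < n) (dvd_h2n : h.*2 %| n).

Let q := n %/ h.*2.

Let n_eq : n = (q.*2 * h)%N.
Proof. by rewrite /q -{1}(divnK dvd_h2n); lia. Qed.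

Let q_gt0 : 0 < q.
Proof. by move: n_gt0; rewrite n_eq; case: (q). Qed.

Let size_alternate_tuple (y : h.-tuple bool) : size (alternate y q.*2) == n.
Proof. by rewrite size_alternate size_tuple -n_eq. Qed.

Let alternate_tuple y := Tuple (size_alternate_tuple y).

Lemma card_antiperiodic : #|antiperiodic n h| = (2 ^ h)%N.
Proof.
have le_hn : h <= n by rewrite n_eq leq_pmull // double_gt0.
have [j q2_eq] : exists j, q.*2 = j.+1 by exists q.*2.-1; rewrite prednK // double_gt0.
have -> : antiperiodic n h = alternate_tuple @: setT.
  apply/setP => x; apply/(antiperiodicP _ le_hn)/imsetP => [rot_x | [y _ ->]].
    have size_y : size (take h x) == h by rewrite size_takel ?size_tuple.
    exists (Tuple size_y) => //; apply: val_inj => /=; rewrite q2_eq.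
    by apply: alternate_rot_negb; rewrite // size_tuple n_eq q2_eq.
  by rewrite /= -{1}(size_tuple y) rot_alternate.
rewrite card_in_imset ?cardsT ?card_tuple ?card_bool // => y z _ _ /(congr1 val) /=.
rewrite q2_eq /= => /(congr1 (take h)).
by rewrite !take_size_cat ?size_tuple // => /val_inj.
Qed.

End CardAntiperiodic.

Lemma index_cycleX (gT : finGroupType) (x : gT) m :
  #|<[x]> : <[x ^+ m]>| = gcdn #[x] m.
Proof.
rewrite -divgS ?cycle_subG ?mem_cycle // -!orderE orderXgcd divnA ?dvdn_gcdl //.
exact: mulKn (order_gt0 x).
Qed.

Lemma orbit_rot_perm n (x y : n.-tuple bool) : 0 < n ->
  (y \in orbit 'P <[rot_perm n]> x) = rot_equiv x y.
Proof.
move=> n_gt0; apply/orbitP/existsP => [[_ /cycleP[k ->] <-] | [k /eqP y_eq]].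
  have lt_k : k %% n < n.+1 by rewrite ltnS ltnW // ltn_pmod.
  by exists (Ordinal lt_k); rewrite /= rot_permXE.
exists (rot_perm n ^+ k); first exact: mem_cycle.
by apply: val_inj; rewrite /= y_eq rot_permX // -ltnS.
Qed.

Lemma acts_rot_dd_words d : [acts <[rot_perm (d + d)]>, on dd_words d | 'P].
Proof. by apply: acts_cycle => x; rewrite !inE -[rot_perm _]expg1 count_rot_permX. Qed.

Lemma compl_dd_words d :
  {in dd_words d, forall x, compl_perm (d + d) x \in dd_words d}.
Proof. by move=> x; rewrite !inE count_compl_perm => /eqP->; rewrite addnK. Qed.

Lemma halfturn_dd_words d m t :
  halfturn (rot_perm (d + d) ^+ m) (compl_perm (d + d)) (dd_words d) t =
    antiperiodic (d + d) (m * 2 ^ t).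
Proof.
apply/setP => x; rewrite !inE -expgM; apply: andb_idl => x_anti.
rewrite -(inj_eq double_inj) (@count_antiperiodic _ (m * 2 ^ t)) ?inE //.
by rewrite addnn.
Qed.

Lemma dd_necklacesE d : 0 < d ->
  dd_necklaces d = orbit 'P <[rot_perm (d + d)]> @: dd_words d.
Proof.
move=> d_gt0; apply: eq_in_imset => x Sx; apply/setP => y.
rewrite inE -orbit_rot_perm ?addn_gt0 ?d_gt0 //; apply: andb_idl => xy.
exact: acts_in_orbit (acts_rot_dd_words d) xy Sx.
Qed.

Theorem lemma2p4 (d : nat) (hd : 2 < d) : ~~ odd #|dd_necklaces d|.
Proof.
have d_gt0 : 0 < d by lia.
have [m odd_m d_eq] := pfactor_coprime (isT : prime 2) d_gt0.
rewrite coprime2n in odd_m; set a := logn 2 d in d_eq.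
set n := d + d; have n_eq : n = (m * 2 ^ a.+1)%N by rewrite /n d_eq expnS; lia.
set g := @rot_perm bool n ^+ m; set c := compl_perm n; set S := dd_words d.
have cg : commute c g := commuteX m (commute_compl_rot n).
have c_fixfree x : c x != x by apply: compl_perm_neq; lia.
have g_order : g ^+ (2 ^ a.+1) = 1 by rewrite -expgM -n_eq rot_perm_order.
have gS : {in S, forall x, g x \in S} by move=> x; rewrite !inE count_rot_permX.
rewrite dd_necklacesE // (@odd_card_orbits_odd_index _ _ <[g]>) ?acts_rot_dd_words
  ?cycle_abelian ?cycle_subG ?mem_cycle //; last first.
  by rewrite index_cycleX (dvdn_odd (dvdn_gcdr _ _)).
rewrite (odd_card_orbits_involution (compl_perm2 n) _ (@compl_dd_words d)); last first.
  by rewrite cent_cycle; apply/cent1P.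
rewrite (card_fixed_orbits S cg (@compl_permK n) c_fixfree g_order).
apply: (odd_sum_pow2 (f := fun t => #|orbit 'P <[g]> @: halfturn g c S t|) odd_m).
  by move=> m1; move: hd; rewrite d_eq m1 mul1n; case: (a) => [|[|a']].
move=> t lt_t_a1; rewrite (card_orbits_halfturn cg (@compl_permK n) c_fixfree gS).
rewrite halfturn_dd_words card_antiperiodic; [by [] | by lia |].
by rewrite n_eq -muln2 -mulnA -expnSr (dvdn_pmul2l (odd_gt0 odd_m)) dvdn_exp2l.
Qed.
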